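(* Let $D,n,r\ge 1$. For $0\le i<n$, let $X_{i}$ be the $(D+1)\times(D+1)$ matrix, with rows and columns indexed by $\{0,\dots,D\}$, whose $(k,\ell)$ entry is the commuting variable $x_{i,\ell}$ if $k+1=\ell$ and $0$ otherwise. Let $\mathcal{H}\subseteq\mathbb{F}^{\{x_{i,j}:0\le i<n,\,1\le j\le D\}}$ be a nonempty set of assignments to the commuting variables $x_{i,j}$ such that for every $1\le\ell\le D$, $\mathcal{H}$ is a hitting set for all polynomials computed by set-multilinear ABPs of width $\le r(D+1)$ and depth $\ell$ with respect to the variable partition $\bigsqcup_{j=1}^{\ell}\{x_{i,j}\}_{0\le i<n}$ (viewed as polynomials in all variables $x_{i,j}$). Let $\mathcal{H}'\subseteq(\mathbb{F}^{(D+1)\times(D+1)})^n$ be obtained by replacing each point $h\in\mathcal{H}$ by the tuple $(X_0(h),\dots,X_{n-1}(h))$ of the matrices $X_i$ with the variables evaluated at $h$. Then for every non-commutative polynomial $f\in\mathbb{F}\{x_0,\dots,x_{n-1}\}$ computed by a non-commutative ABP of width $\le r$ and depth $D$: $f$ is zero iff $f(A)$ is the zero matrix for every $A\in\mathcal{H}'$.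
   Context: $\mathbb{F}\{x_0,\dots,x_{n-1}\}$ denotes the ring of polynomials in non-commuting variables over $\mathbb{F}$. A (non-commutative) ABP of depth $D$ is a directed acyclic graph with vertices partitioned into layers $0,\dots,D$, a single source in layer $0$, a single sink in layer $D$, edges only from layer $i-1$ to layer $i$, each labeled by an affine linear form; it computes the sum over source-to-sink paths of the products of labels in path order; its width is the maximum number of vertices in a layer. A set-multilinear ABP of depth $\ell$ with respect to a partition $Y_1\sqcup\dots\sqcup Y_\ell$ is an ABP of depth $\ell$ in which every edge from layer $j-1$ to layer $j$ is labeled by a homogeneous linear form in $Y_j$. A set $\mathcal{H}$ is a hitting set for a class of polynomials if each polynomial in the class is zero iff it vanishes on all points of $\mathcal{H}$. Scalars $a\in\mathbb{F}$ act on matrices as $a\mathrm{I}$. *)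

From HB Require Import structures.
From mathcomp Require Import all_boot all_order all_algebra.
Set Implicit Arguments. Unset Strict Implicit. Unset Printing Implicit Defensive.
Import Order.TTheory GRing.Theory Num.Theory.
Local Open Scope ring_scope.

(* An ABP of depth L and width <= W is encoded with every
   layer having vertex set 'I_W (missing vertices / edges = label 0);
   the source is vertex 0 of layer 0 and the sink is vertex 0 of layer L.
   A source-to-sink path is a map p : 'I_L.+1 -> 'I_W with p 0 = 0 and
   p L = 0; its k-th edge (k < L) goes from p k (layer k) to p (k+1). *)
Definition good_path (L W : nat) (p : {ffun 'I_L.+1 -> 'I_W}) : bool :=
  (nat_of_ord (p ord0) == 0%N) && (nat_of_ord (p ord_max) == 0%N).

Definition src_of (L : nat) (k : 'I_L) : 'I_L.+1 := widen_ord (leqnSn L) k.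
Definition tgt_of (L : nat) (k : 'I_L) : 'I_L.+1 := lift ord0 k.

(* Non-commutative side.  A non-commutative polynomial in F{x_0..x_{n-1}}
   is given by its coefficient function on words (seq 'I_n).
   An affine linear form is (constant term, coefficient of x_i). *)
Record ncABP (F : Type) (n D r : nat) := NcABP {
  nc_label : 'I_D -> 'I_r -> 'I_r -> (F * ('I_n -> F))%type }.

Fixpoint ncprod_coef (F : ringType) (n : nat) (ls : seq (F * ('I_n -> F)))
    (w : seq 'I_n) : F :=
  match ls with
  | [::] => if w is [::] then 1 else 0
  | l :: ls' => l.1 * ncprod_coef ls' w +
               (if w is i :: w' then l.2 i * ncprod_coef ls' w' else 0)
  end.

Definition nc_coef (F : ringType) (n D r : nat) (P : ncABP F n D r)
    (w : seq 'I_n) : F :=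
  \sum_(p : {ffun 'I_D.+1 -> 'I_r} | good_path p)
     ncprod_coef [seq nc_label P k (p (src_of k)) (p (tgt_of k)) | k <- enum 'I_D] w.

Definition nc_eval (F : comRingType) (n d m : nat) (f : seq 'I_n -> F)
    (A : 'I_n -> 'M[F]_m.+1) : 'M[F]_m.+1 :=
  \sum_(k < d.+1) \sum_(t : k.-tuple 'I_n) f t *: \prod_(j < k) A (tnth t j).

(* The matrix X_i (rows/columns indexed by 0..D) evaluated at an assignment
   h of the commuting variables x_{i,j}, 0 <= i < n, 1 <= j <= D; the
   variable x_{i,j} is h (i, j') with j' : 'I_D, j = j' + 1. *)
Definition Xmat (F : ringType) (n D : nat) (h : 'I_n * 'I_D -> F) (i : 'I_n)
    : 'M[F]_D.+1 :=
  \matrix_(k < D.+1, l < D.+1)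
    (if @insub _ (fun x : nat => (x < D)%N) 'I_D (nat_of_ord k) is Some j
     then (if nat_of_ord l == (nat_of_ord k).+1 then h (i, j) else 0)
     else 0).

(* Commutative side.  Variables x_{i,j} indexed by ('I_n * 'I_D)
   ((i, j') stands for x_{i, j'+1}).  A commutative polynomial is given by
   its coefficient function on exponent vectors (monomials). *)
Record smlABP (F : Type) (n D l W : nat) := SmlABP {
  sml_label : 'I_l -> 'I_W -> 'I_W -> ('I_n * 'I_D -> F) }.

(* set-multilinear w.r.t. Y_1 ⊔ ... ⊔ Y_l, Y_j = {x_{i,j}}_i: every edge
   from layer k to layer k+1 (k < l) is a homogeneous linear form in
   Y_{k+1} (i.e. only variables (i, j') with j' = k occur). *)
Definition is_setml (F : ringType) (n D l W : nat) (B : smlABP F n D l W) : Prop :=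
  forall (k : 'I_l) (u v : 'I_W) (x : 'I_n * 'I_D),
    nat_of_ord x.2 != nat_of_ord k -> sml_label B k u v x = 0.

(* coefficient of the monomial with exponent vector e in the commutative
   product of the linear forms ls 0, ..., ls (L-1) *)
Definition linprod_coef (F : ringType) (V : finType) (L : nat)
    (ls : 'I_L -> V -> F) (e : V -> nat) : F :=
  \sum_(t : {ffun 'I_L -> V} | [forall v, e v == #|[pred k | t k == v]|])
     \prod_(k < L) ls k (t k).

Definition sml_coef (F : ringType) (n D l W : nat) (B : smlABP F n D l W)
    (e : 'I_n * 'I_D -> nat) : F :=
  \sum_(p : {ffun 'I_l.+1 -> 'I_W} | good_path p)
     linprod_coef (fun k => sml_label B k (p (src_of k)) (p (tgt_of k))) e.

(* evaluation at a point h of a commutative polynomial all of whose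
   monomials have every exponent <= d *)
Definition cpoly_eval (F : comRingType) (V : finType) (d : nat)
    (c : (V -> nat) -> F) (h : V -> F) : F :=
  \sum_(e : {ffun V -> 'I_d.+1}) c (fun v => nat_of_ord (e v)) * \prod_(v : V) h v ^+ e v.

From HB Require Import structures.
From mathcomp Require Import all_boot all_order all_algebra zify.
Import GRing.Theory.
Local Open Scope ring_scope.
Set Implicit Arguments. Unset Strict Implicit. Unset Printing Implicit Defensive.

(* The matrices X_i are strictly upper triangular shifts whose (k, k+1)
   entry is x_{i,k+1}.  Hence for a word of length l the (0, l) entry of
   f(X(h)) is g_l(h) = sum_{|w| = l} f(w) x_{w_1,1} ... x_{w_l,l}, while the
   (0, 0) entry is the constant term f([::]) and f vanishes on words longer
   than D.  It therefore suffices to show that each g_l (1 <= l <= D) is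
   computed by a set-multilinear ABP of width r(D+1) and depth l whose
   coefficient at the monomial of w is f(w).

   The "compressed" ABP has vertices (u, s): vertex u of the original ABP
   reached after its first s layers.  An edge labelled with the letter i
   jumps from (u, s) to (v, t), s < t, through the constant parts of the
   layers s, ..., t-2 and the x_i-part of layer t-1; the last edge jumps to
   the sink through all remaining layers.  Summing the paths of this ABP
   from the end (lemma [cweight_chain]) reproduces the coefficient of w in
   the matrix product of the layers of the original ABP. *)

Definition fcons (T : Type) (L : nat) (c : T) (q : {ffun 'I_L.+1 -> T}) :
    {ffun 'I_L.+2 -> T} :=
  [ffun k => if unlift ord0 k is Some k' then q k' else c].

Lemma fcons0 (T : Type) (L : nat) (c : T) (q : {ffun 'I_L.+1 -> T}) :
  fcons c q ord0 = c.
Proof. by rewrite ffunE unlift_none. Qed.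

Lemma fconsS (T : Type) (L : nat) (c : T) (q : {ffun 'I_L.+1 -> T}) (k : 'I_L.+1) :
  fcons c q (lift ord0 k) = q k.
Proof. by rewrite ffunE liftK. Qed.

Lemma sum_ffunS (V : nmodType) (T : finType) (L : nat) (G : {ffun 'I_L.+2 -> T} -> V) :
  \sum_p G p = \sum_c \sum_q G (fcons c q).
Proof.
rewrite pair_big /= (reindex (fun cq : T * {ffun 'I_L.+1 -> T} => fcons cq.1 cq.2)) //.
exists (fun p : {ffun 'I_L.+2 -> T} => (p ord0, [ffun k : 'I_L.+1 => p (lift ord0 k)]))
  => [[c q] _ | p _] /=.
  by rewrite fcons0; congr pair; apply/ffunP => k; rewrite ffunE fconsS.
by apply/ffunP => k; rewrite ffunE; case: unliftP => [j ->|->]; rewrite ?ffunE.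
Qed.

Definition endpoints (T : eqType) (L : nat) (a b : T) (p : {ffun 'I_L.+1 -> T}) : bool :=
  (p ord0 == a) && (p ord_max == b).

Lemma path_sum0 (V : nmodType) (T : finType) (a b : T) (G : {ffun 'I_1 -> T} -> V) :
  \sum_(p | endpoints a b p) G p = if a == b then G [ffun=> a] else 0.
Proof.
have E (p : {ffun 'I_1 -> T}) : p = [ffun=> p ord0].
  by apply/ffunP => k; rewrite ffunE; congr (p _); apply/val_inj; case: k => [[]].
rewrite (reindex (fun c : T => [ffun=> c])) /=; last first.
  by exists (fun p : {ffun 'I_1 -> T} => p ord0) => [c _ | p _]; rewrite ?ffunE // -E.
rewrite /endpoints; under eq_bigl => c do rewrite !ffunE.
case: eqP => [<-|ne]; first by rewrite (big_pred1 a) // => c; rewrite andbb.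
by rewrite big1 // => c /andP[/eqP -> /eqP].
Qed.

Lemma path_sumS (V : nmodType) (T : finType) (L : nat) (a b : T)
    (G : {ffun 'I_L.+2 -> T} -> V) :
  \sum_(p | endpoints a b p) G p
    = \sum_c \sum_(q | endpoints c b q) G (fcons a q).
Proof.
rewrite big_mkcond sum_ffunS (bigD1 a) //= [X in _ + X]big1 => [|c ca]; last first.
  by apply: big1 => q; rewrite /endpoints fcons0 (negbTE ca).
rewrite addr0 -big_mkcond (partition_big (fun q : {ffun 'I_L.+1 -> T} => q ord0) xpredT) //=.
apply: eq_bigr => c _; apply: eq_bigl => q; rewrite /endpoints.
have -> : @ord_max L.+1 = lift ord0 (@ord_max L) by apply: val_inj.
by rewrite fcons0 fconsS eqxx andbC.
Qed.

Lemma src_of0 (L : nat) : src_of (ord0 : 'I_L.+1) = ord0.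
Proof. exact: val_inj. Qed.
Lemma tgt_of0 (L : nat) : tgt_of (ord0 : 'I_L.+1) = lift ord0 ord0.
Proof. exact: val_inj. Qed.
Lemma src_ofS (L : nat) (k : 'I_L) : src_of (lift ord0 k) = lift ord0 (src_of k).
Proof. exact: val_inj. Qed.
Lemma tgt_ofS (L : nat) (k : 'I_L) : tgt_of (lift ord0 k) = lift ord0 (tgt_of k).
Proof. exact: val_inj. Qed.

Lemma path_sum_prod (R : pzRingType) (W L : nat) (M : 'I_L -> 'M[R]_W) (a b : 'I_W) :
  \sum_(p | endpoints a b p) \prod_(k < L) M k (p (src_of k)) (p (tgt_of k))
    = (\prod_(k < L) M k) a b.
Proof.
elim: L M a => [|L IH] M a.
  by rewrite path_sum0 !big_ord0 mxE; case: eqP.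
rewrite path_sumS big_ord_recl mxE; apply: eq_bigr => c _.
rewrite -IH mulr_sumr; apply: eq_bigr => q /andP[/eqP qc _].
rewrite big_ord_recl src_of0 tgt_of0 fcons0 fconsS qc.
by congr (_ * _); apply: eq_bigr => k _; rewrite src_ofS tgt_ofS !fconsS.
Qed.

Definition mxlayer (R : pzRingType) (n W : nat) (lab : 'I_W -> 'I_W -> R * ('I_n -> R)) :
    'M[R]_W * ('I_n -> 'M[R]_W) :=
  (\matrix_(u, v) (lab u v).1, fun i => \matrix_(u, v) (lab u v).2 i).

Lemma path_sum_ncprod (R : nzRingType) (n W L : nat)
    (lab : 'I_L -> 'I_W.+1 -> 'I_W.+1 -> R * ('I_n -> R)) (a b : 'I_W.+1) (w : seq 'I_n) :
  \sum_(p | endpoints a b p)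
     ncprod_coef [seq lab k (p (src_of k)) (p (tgt_of k)) | k <- enum 'I_L] w
    = ncprod_coef [seq mxlayer (lab k) | k <- enum 'I_L] w a b.
Proof.
elim: L lab a w => [|L IH] lab a w.
  rewrite path_sum0 enum_ord0 /=; case: w => [|i w]; last by rewrite mxE; case: eqP.
  by rewrite mxE; case: eqP.
have shift (q : {ffun 'I_L.+1 -> 'I_W.+1}) :
    [seq lab k (fcons a q (src_of k)) (fcons a q (tgt_of k)) | k <- map (lift ord0) (enum 'I_L)]
    = [seq lab (lift ord0 k) (q (src_of k)) (q (tgt_of k)) | k <- enum 'I_L].
  by rewrite -map_comp; apply: eq_map => k; rewrite /= src_ofS tgt_ofS !fconsS.
rewrite path_sumS enum_ordSl /= -map_comp.
under eq_bigr => c _ do under eq_bigr => q _ do rewrite shift src_of0 tgt_of0 fcons0 fconsS.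
case: w => [|i w] /=; rewrite -!mulmxE !mxE ?addr0 -?big_split; apply: eq_bigr => c _.
  rewrite mxE -IH mulr_sumr; apply: eq_bigr => q /andP[/eqP qc _].
  by rewrite qc addr0.
rewrite !mxE -!IH !mulr_sumr -big_split; apply: eq_bigr => q /andP[/eqP qc _].
by rewrite qc.
Qed.

Lemma ncprod_coef_long (R : nzRingType) (n : nat) (ls : seq (R * ('I_n -> R))) (w : seq 'I_n) :
  (size ls < size w)%N -> ncprod_coef ls w = 0.
Proof.
elim: ls w => [|x ls IH] [|i w] //= lt_ls_w.
by rewrite !IH ?mulr0 ?addr0 // ltnW.
Qed.

Lemma ncprod_coef_cons (R : nzRingType) (n : nat) (ls : seq (R * ('I_n -> R)))
    (i : 'I_n) (w : seq 'I_n) :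
  ncprod_coef ls (i :: w) = \sum_(m < size ls)
    (\prod_(x <- take m ls) x.1) * (nth (0, fun=> 0) ls m).2 i * ncprod_coef (drop m.+1 ls) w.
Proof.
elim: ls => [|x ls IH] /=; first by rewrite big_ord0.
rewrite big_ord_recl /= big_nil mul1r drop0 addrC IH mulr_sumr; congr (_ + _).
by apply: eq_bigr => m _; rewrite big_cons !mulrA.
Qed.

Lemma sum_after (V : nmodType) (N s : nat) (G : nat -> V) :
  \sum_(t < N.+1) (if (s < t)%N then G t.-1 else 0) = \sum_(m < N - s) G (s + m)%N.
Proof.
rewrite big_ord_recl /= add0r -(big_mkord xpredT (fun m => G (s + m)%N)).
have -> : \sum_(t < N) (if (s < bump 0 t)%N then G (bump 0 t).-1 else 0)
          = \sum_(s <= t < N) G t.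
  by rewrite big_geq_mkord [RHS]big_mkcond; apply: eq_bigr => t _; rewrite /bump add1n ltnS.
rewrite -[in LHS](add0n s) big_addn.
by apply: eq_bigr => m _; rewrite addnC.
Qed.

(* Vertices of the compressed ABP: 'I_(m * N.+1) encodes pairs in
   'I_m * 'I_N.+1 via x = u * N.+1 + s. *)
Lemma vtx_node_subproof (m N : nat) (x : 'I_(m * N.+1)) : (x %/ N.+1 < m)%N.
Proof. by rewrite ltn_divLR. Qed.

Definition vtx_node (m N : nat) (x : 'I_(m * N.+1)) : 'I_m := Ordinal (vtx_node_subproof x).
Definition vtx_pos (m N : nat) (x : 'I_(m * N.+1)) : 'I_N.+1 := Ordinal (ltn_pmod x (ltn0Sn N)).

Definition root_vtx (m N : nat) : 'I_(m.+1 * N.+1) := Ordinal (isT : 0 < m.+1 * N.+1)%N.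

Lemma root_vtx_node (m N : nat) : vtx_node (root_vtx m N) = ord0.
Proof. by apply: val_inj; rewrite /= div0n. Qed.

Lemma root_vtx_pos (m N : nat) : vtx_pos (root_vtx m N) = ord0.
Proof. by apply: val_inj; rewrite /= mod0n. Qed.

Lemma sum_vertices (V : nmodType) (m N : nat) (G : 'I_m -> 'I_N.+1 -> V) :
  \sum_(x : 'I_(m * N.+1)) G (vtx_node x) (vtx_pos x) = \sum_u \sum_s G u s.
Proof.
have code_proof (us : 'I_m * 'I_N.+1) : (us.1 * N.+1 + us.2 < m * N.+1)%N.
  case: us => [[u lt_um] [s lt_sN]] /=.
  by rewrite (leq_trans (_ : _ < u * N.+1 + N.+1)%N) ?ltn_add2l // -mulSnr leq_mul2r lt_um orbT.
pose code us := Ordinal (code_proof us).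
have decode us : (vtx_node (code us), vtx_pos (code us)) = us.
  case: us => u s; congr pair; apply: val_inj => /=.
    by rewrite divnMDl // divn_small // addn0.
  by rewrite modnMDl modn_small.
rewrite pair_big /= (reindex code) /=; last first.
  exists (fun x => (vtx_node x, vtx_pos x)) => [us _ | x _]; first exact: decode.
  by apply: val_inj; rewrite /= -divn_eq.
by apply: eq_bigr => us _; rewrite -[in RHS](decode us).
Qed.

Section CompressedABP.

Variables (R : nzRingType) (n D r : nat) (P : ncABP R n D r.+1).

Definition abp_layers : seq ('M[R]_r.+1 * ('I_n -> 'M[R]_r.+1)) :=
  [seq mxlayer (nc_label P k) | k <- enum 'I_D].

Lemma nc_coefE (w : seq 'I_n) : nc_coef P w = ncprod_coef abp_layers w ord0 ord0.
Proof.
rewrite /nc_coef -path_sum_ncprod; apply: eq_bigl => p.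
by rewrite /good_path /endpoints -!val_eqE.
Qed.

Definition suffix_coef (s : nat) (w : seq 'I_n) : 'M[R]_r.+1 :=
  ncprod_coef (drop s abp_layers) w.

Definition hop (i : 'I_n) (s k : nat) : 'M[R]_r.+1 :=
  (\prod_(x <- take (k - s) (drop s abp_layers)) x.1) * (nth (0, fun=> 0) abp_layers k).2 i.

Definition step (i : 'I_n) (s t : nat) : 'M[R]_r.+1 :=
  if (s < t)%N then hop i s t.-1 else 0.

Lemma suffix_coef_cons (s : nat) (i : 'I_n) (w : seq 'I_n) :
  suffix_coef s (i :: w) = \sum_(t < D.+1) step i s t * suffix_coef t w.
Proof.
have shift (t : nat) : step i s t * suffix_coef t w
    = if (s < t)%N then hop i s t.-1 * suffix_coef t.-1.+1 w else 0.
  by rewrite /step; case: ifP => [lt_st|_]; rewrite ?mul0r // prednK // (leq_ltn_trans _ lt_st).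
under eq_bigr => t _ do rewrite shift.
rewrite (sum_after _ _ (fun k => hop i s k * suffix_coef k.+1 w)) /suffix_coef.
rewrite ncprod_coef_cons size_drop size_map size_enum_ord.
apply: eq_bigr => m _.
by rewrite /hop addKn nth_drop drop_drop addSn addnC.
Qed.

Local Notation vtx := 'I_(r.+1 * D.+1).

Definition mid_weight (i : 'I_n) (x y : vtx) : R :=
  step i (vtx_pos x) (vtx_pos y) (vtx_node x) (vtx_node y).

Definition last_weight (i : 'I_n) (x y : vtx) : R :=
  if val y == 0%N then suffix_coef (vtx_pos x) [:: i] (vtx_node x) ord0 else 0.

Definition cweight (l k : nat) (i : 'I_n) (x y : vtx) : R :=
  if k == l.-1 then last_weight i x y else mid_weight i x y.

Definition cweight_mx (l k : nat) (i : 'I_n) : 'M[R]_(r.+1 * D.+1) :=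
  \matrix_(x, y) cweight l k i x y.

Lemma cweight_chain (w : seq 'I_n) (i0 : 'I_n) (j : nat) (x : vtx) : (j < size w)%N ->
  (\prod_(j <= k < size w) cweight_mx (size w) k (nth i0 w k)) x (root_vtx r D)
    = suffix_coef (vtx_pos x) (drop j w) (vtx_node x) ord0.
Proof.
set l := size w => lt_jl.
suff chain d : (d < l)%N -> forall x,
    (\prod_(l - d.+1 <= k < l) cweight_mx l k (nth i0 w k)) x (root_vtx r D)
      = suffix_coef (vtx_pos x) (drop (l - d.+1) w) (vtx_node x) ord0.
  by have := chain (l - j.+1)%N; rewrite (_ : l - (l - j.+1).+1 = j)%N; [apply; lia | lia].
elim: d => [|d IH] lt_dl {}x.
  rewrite subn1 big_ltn ?ltn_predL // prednK // big_geq // mulr1 mxE /cweight eqxx.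
  by rewrite /last_weight eqxx (drop_nth i0) ?ltn_predL // prednK // drop_oversize.
have lt_jl' : (l - d.+2 < l)%N by lia.
rewrite big_ltn // (_ : (l - d.+2).+1 = l - d.+1)%N; last by lia.
set M := \prod_(_ <= _ < _) _; rewrite -mulmxE mxE.
have not_last : (l - d.+2 == l.-1)%N = false by apply/eqP; lia.
under eq_bigr => y _ do rewrite /M IH 1?ltnW // mxE /cweight not_last.
set i := nth i0 w _; set w' := drop _ w.
rewrite /mid_weight (sum_vertices (fun u t => step i (vtx_pos x) t (vtx_node x) u
                                               * suffix_coef t w' u ord0)).
rewrite exchange_big (drop_nth i0) // -/i (_ : (l - d.+2).+1 = l - d.+1)%N; last by lia.
rewrite suffix_coef_cons summxE; apply: eq_bigr => t _.
by rewrite -mulmxE mxE.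
Qed.

Lemma compressed_path_sum (l : nat) (w : seq 'I_n) (i0 : 'I_n) :
  size w = l -> (0 < l)%N ->
  \sum_(p : {ffun 'I_l.+1 -> vtx} | good_path p)
     \prod_(k < l) cweight l k (nth i0 w k) (p (src_of k)) (p (tgt_of k))
    = nc_coef P w.
Proof.
move=> <- w_gt0.
rewrite (eq_bigl (endpoints (root_vtx r D) (root_vtx r D))) => [|p]; last first.
  by rewrite /good_path /endpoints -!val_eqE.
have entry k x y :
    cweight (size w) k (nth i0 w k) x y = cweight_mx (size w) k (nth i0 w k) x y.
  by rewrite mxE.
under eq_bigr => p _ do under eq_bigr => k _ do rewrite entry.
rewrite path_sum_prod -(big_mkord xpredT (fun k => cweight_mx (size w) k (nth i0 w k))).
rewrite (cweight_chain _ _ w_gt0) root_vtx_pos root_vtx_node.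
by rewrite /suffix_coef /= ?drop0 nc_coefE.
Qed.

End CompressedABP.

Lemma cpoly_eval_linprod (R : comNzRingType) (V : finType) (l : nat) (ls : 'I_l -> V -> R)
    (h : V -> R) :
  cpoly_eval l (linprod_coef ls) h = \prod_(k < l) \sum_v ls k v * h v.
Proof.
rewrite bigA_distr_bigA /cpoly_eval /linprod_coef.
under eq_bigr => e _ do rewrite mulr_suml big_mkcond.
rewrite exchange_big /=; apply: eq_bigr => t _.
have count_le v : (#|[pred k | t k == v]| < l.+1)%N.
  by rewrite ltnS -[X in (_ <= X)%N]card_ord max_card.
pose et := [ffun v => Ordinal (count_le v)].
rewrite -big_mkcond (big_pred1 et) => [|e]; last first.
  apply/forallP/eqP => [e_t|-> v]; last by rewrite ffunE.
  by apply/ffunP => v; apply/val_inj; rewrite ffunE /=; apply/eqP/e_t.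
rewrite big_split /=; congr (_ * _).
under eq_bigr => v _ do rewrite ffunE /=.
rewrite (partition_big t xpredT) //=; apply: eq_bigr => v _.
by rewrite -prodr_const; apply: eq_big => [k|k /eqP ->].
Qed.

Lemma linprod_coef_setml (R : comNzRingType) (n D l : nat) (ls : 'I_l -> 'I_n * 'I_D -> R)
    (t0 : 'I_l -> 'I_n * 'I_D) :
  (forall k v, val v.2 != val k -> ls k v = 0) -> (forall k, val (t0 k).2 = val k) ->
  linprod_coef ls (fun v => #|[pred k | t0 k == v]|) = \prod_k ls k (t0 k).
Proof.
move=> ls_setml t0_pos; rewrite /linprod_coef (bigD1 [ffun k => t0 k]) /=; last first.
  by apply/forallP => v; apply/eqP/eq_card => k; rewrite !inE ffunE.
rewrite [X in _ + X]big1 ?addr0 => [|t /andP[/forallP t_count t_ne]].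
  by apply: eq_bigr => k _; rewrite ffunE.
have [/forallP t_pos|] := boolP [forall k, val (t k).2 == val k]; last first.
  by case/forallPn => k k_off; rewrite (bigD1 k) //= ls_setml ?mul0r.
exfalso; move/eqP: t_ne; apply; apply/ffunP => k; rewrite ffunE.
have /eqP count_k := t_count (t0 k).
have : (0 < #|[pred k' | t k' == t0 k]|)%N.
  by rewrite -count_k; apply/card_gt0P; exists k; rewrite inE.
case/card_gt0P => k' /[!inE] /eqP t_k'.
suff k'_k : k' = k by move: t_k'; rewrite k'_k.
by apply/val_inj; rewrite -(eqP (t_pos k')) t_k' t0_pos.
Qed.

Lemma sml_eval (R : comNzRingType) (n D l W : nat) (B : smlABP R n D l W)
    (h : 'I_n * 'I_D -> R) :
  cpoly_eval l (sml_coef B) h = \sum_(p | good_path p)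
    \prod_(k < l) \sum_v sml_label B k (p (src_of k)) (p (tgt_of k)) v * h v.
Proof.
rewrite /cpoly_eval /sml_coef; under eq_bigr => e _ do rewrite mulr_suml.
by rewrite exchange_big; apply: eq_bigr => p _; rewrite -cpoly_eval_linprod.
Qed.

Lemma sml_coef_setml (R : comNzRingType) (n D l W : nat) (B : smlABP R n D l W)
    (t0 : 'I_l -> 'I_n * 'I_D) :
  is_setml B -> (forall k, val (t0 k).2 = val k) ->
  sml_coef B (fun v => #|[pred k | t0 k == v]|)
    = \sum_(p | good_path p) \prod_k sml_label B k (p (src_of k)) (p (tgt_of k)) (t0 k).
Proof.
move=> B_setml t0_pos; apply: eq_bigr => p _.
by apply: linprod_coef_setml => // k v; apply: B_setml.
Qed.

Definition compressed_abp (R : nzRingType) (n D r : nat) (P : ncABP R n D r.+1) (l : nat) :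
    smlABP R n D l (r.+1 * D.+1) :=
  SmlABP (fun k x y v => if val v.2 == val k then cweight P l k v.1 x y else 0).

Lemma compressed_abp_setml (R : nzRingType) (n D r : nat) (P : ncABP R n D r.+1) (l : nat) :
  is_setml (compressed_abp P l).
Proof. by move=> k x y v /negbTE /= ->. Qed.

Section CompressedABPTheory.

Variables (R : comNzRingType) (n D r : nat) (P : ncABP R n D r.+1) (l : nat).
Hypotheses (l_gt0 : (0 < l)%N) (l_le_D : (l <= D)%N).

Lemma compressed_abp_coef (w : seq 'I_n) (i0 : 'I_n) : size w = l ->
  sml_coef (compressed_abp P l)
    (fun v => #|[pred k : 'I_l | (nth i0 w k, widen_ord l_le_D k) == v]|) = nc_coef P w.
Proof.
move=> size_w.
rewrite (sml_coef_setml (t0 := fun k => (nth i0 w k, widen_ord l_le_D k))) //; last first.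
  exact: compressed_abp_setml.
rewrite -(compressed_path_sum P i0 size_w l_gt0).
by apply: eq_bigr => p _; apply: eq_bigr => k _; rewrite /= eqxx.
Qed.

Lemma compressed_abp_eval (h : 'I_n * 'I_D -> R) :
  cpoly_eval l (sml_coef (compressed_abp P l)) h = \sum_(t : {ffun 'I_l -> 'I_n})
    (\prod_(k < l) h (t k, widen_ord l_le_D k)) * nc_coef P [seq t k | k <- enum 'I_l].
Proof.
have layer_vars (k : 'I_l) (G : 'I_n -> R) :
    \sum_(v : 'I_n * 'I_D) (if val v.2 == val k then G v.1 else 0) * h v
      = \sum_i G i * h (i, widen_ord l_le_D k).
  transitivity (\sum_i \sum_(j : 'I_D) (if val j == val k then G i else 0) * h (i, j)).
    by rewrite pair_bigA; apply: eq_bigr => -[i j].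
  apply: eq_bigr => i _; rewrite (bigD1 (widen_ord l_le_D k)) //= eqxx big1 ?addr0 // => j j_k.
  by rewrite ifN ?mul0r //; apply: contra j_k => /eqP j_k; apply/eqP/val_inj.
rewrite sml_eval.
under eq_bigr => p _ do under eq_bigr => k _ do
  rewrite /= (layer_vars k (fun i => cweight P l k i _ _)).
under eq_bigr => p _ do rewrite bigA_distr_bigA /=.
rewrite exchange_big; apply: eq_bigr => t _.
under eq_bigr => p _ do rewrite big_split /=.
rewrite -mulr_suml mulrC; congr (_ * _).
have size_t : size [seq t k | k <- enum 'I_l] = l by rewrite size_map size_enum_ord.
rewrite -(compressed_path_sum P (t (Ordinal l_gt0)) size_t l_gt0).
apply: eq_bigr => p _; apply: eq_bigr => k _.
by rewrite (nth_map k) ?size_enum_ord // nth_ord_enum.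
Qed.

End CompressedABPTheory.

Section ShiftMatrices.

Variables (R : comNzRingType) (n D : nat) (h : 'I_n * 'I_D -> R).

(* The value of x_{i,m+1} at h, and 0 when m >= D. *)
Definition xval (i : 'I_n) (m : nat) : R :=
  if @insub _ (fun x : nat => (x < D)%N) 'I_D m is Some j then h (i, j) else 0.

Lemma XmatE (i : 'I_n) (c b : 'I_D.+1) : Xmat h i c b = (val b == (val c).+1)%:R * xval i c.
Proof. by rewrite mxE /xval; case: insub => [j|]; case: eqP; rewrite ?mul1r ?mul0r. Qed.

Lemma Xmat_prod (k : nat) (g : 'I_k -> 'I_n) (a b : 'I_D.+1) :
  (\prod_(j < k) Xmat h (g j)) a b
    = (val b == (val a + k)%N)%:R * \prod_(j < k) xval (g j) (val a + j).
Proof.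
elim: k g b => [|k IH] g b; first by rewrite !big_ord0 mxE addn0 mulr1 eq_sym.
rewrite big_ord_recr /=; set M := \prod_(j < k) _; rewrite -mulmxE mxE.
set g' := fun j => g (widen_ord (leqnSn k) j).
transitivity (\sum_(c < D.+1) (val c == val a + k)%:R * \prod_(j < k) xval (g' j) (val a + j)
                            * ((val b == (val c).+1)%:R * xval (g ord_max) c)).
  by apply: eq_bigr => c _; rewrite -IH XmatE.
rewrite [in RHS]big_ord_recr /= addnS.
have [lt_akD | le_Dak] := ltnP (a + k) D.+1.
  rewrite (bigD1 (Ordinal lt_akD)) //= eqxx mul1r [X in _ + X]big1 ?addr0 => [|c c_ne].
    by rewrite mulrCA.
  have -> : (val c == a + k)%N = false.
    by apply/negbTE; apply: contra c_ne => /eqP c_ak; apply/eqP/val_inj.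
  by rewrite !mul0r.
rewrite (ltn_eqF (leq_trans (ltn_ord b) (leqW le_Dak))) mul0r big1 // => c _.
by rewrite (ltn_eqF (leq_trans (ltn_ord c) le_Dak)) !mul0r.
Qed.

Lemma nc_eval_Xmat (f : seq 'I_n -> R) (l : 'I_D.+1) :
  nc_eval D f (Xmat h) ord0 l = \sum_(t : l.-tuple 'I_n) f t * \prod_(j < l) xval (tnth t j) j.
Proof.
rewrite /nc_eval summxE (bigD1 l) //= [X in _ + X]big1 ?addr0 => [|k k_ne].
  rewrite summxE; apply: eq_bigr => t _; rewrite mxE Xmat_prod /= add0n eqxx mul1r.
  by under eq_bigr do rewrite add0n.
rewrite summxE big1 // => t _; rewrite mxE Xmat_prod /= add0n.
have -> : (val l == k) = false.
  by apply/negbTE; apply: contra k_ne => /eqP l_k; apply/eqP/val_inj.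
by rewrite mul0r mulr0.
Qed.

Lemma nc_eval_Xmat_const (f : seq 'I_n -> R) : nc_eval D f (Xmat h) ord0 ord0 = f [::].
Proof.
rewrite nc_eval_Xmat (big_pred1 [tuple]) => [|t]; last by apply/esym/eqP; exact: tuple0.
by rewrite big_ord0 mulr1.
Qed.

Lemma nc_eval_Xmat_word (f : seq 'I_n -> R) (l : nat) (l_le_D : (l <= D)%N) :
  nc_eval D f (Xmat h) ord0 (Ordinal (l_le_D : l < D.+1)%N)
    = \sum_(t : {ffun 'I_l -> 'I_n})
        (\prod_(k < l) h (t k, widen_ord l_le_D k)) * f [seq t k | k <- enum 'I_l].
Proof.
rewrite nc_eval_Xmat /= (reindex (fun t : {ffun 'I_l -> 'I_n} => [tuple t i | i < l])) /=.
  apply: eq_bigr => t _; rewrite mulrC; congr (_ * _).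
  apply: eq_bigr => k _; have lt_kD : (k < D)%N := leq_trans (ltn_ord k) l_le_D.
  by rewrite tnth_mktuple /xval insubT /=; congr (h (_, _)); apply: val_inj.
exists (fun t : l.-tuple 'I_n => [ffun k => tnth t k]) => [t _ | t _].
  by apply/ffunP => k; rewrite ffunE tnth_mktuple.
by apply: eq_from_tnth => k; rewrite tnth_mktuple ffunE.
Qed.

End ShiftMatrices.

Lemma nc_coef_long (R : nzRingType) (n D r : nat) (P : ncABP R n D r) (w : seq 'I_n) :
  (D < size w)%N -> nc_coef P w = 0.
Proof.
move=> D_lt_w; apply: big1 => p _; apply: ncprod_coef_long.
by rewrite size_map size_enum_ord.
Qed.

Theorem theorem4p5 (F : fieldType) (D n r : nat)
  (hD : (0 < D)%N) (hn : (0 < n)%N) (hr : (0 < r)%N)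
  (H : ('I_n * 'I_D -> F) -> Prop)
  (Hne : exists h, H h)
  (Hhit : forall l : nat, (0 < l)%N -> (l <= D)%N ->
     forall B : smlABP F n D l (r * D.+1), is_setml B ->
       ((forall e, sml_coef B e = 0) <->
        (forall h, H h -> cpoly_eval l (sml_coef B) h = 0)))
  (P : ncABP F n D r) :
  (forall w : seq 'I_n, nc_coef P w = 0) <->
  (forall h, H h -> nc_eval D (nc_coef P) (fun i => Xmat h i) = 0).
Proof.
case: r hr P Hhit => // r _ P Hhit.
split=> [P_zero h _ | P_hits w].
  by rewrite /nc_eval big1 // => k _; rewrite big1 // => t _; rewrite P_zero scale0r.
have [D_lt_w | w_le_D] := ltnP D (size w); first exact: nc_coef_long.
(* The empty word: its coefficient is the (0, 0) entry of f(X(h)), H nonempty. *)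
have [/size0nil -> | w_gt0] := posnP (size w).
  by have [h Hh] := Hne; rewrite -(nc_eval_Xmat_const h) P_hits ?mxE.
(* Otherwise the compressed ABP of depth |w| vanishes on H, hence is zero,
   and its coefficient at the monomial of w is f(w). *)
have B_hits h : H h -> cpoly_eval (size w) (sml_coef (compressed_abp P (size w))) h = 0.
  by move=> Hh; rewrite (compressed_abp_eval _ w_gt0 w_le_D) -nc_eval_Xmat_word P_hits ?mxE.
have B_zero := (Hhit _ w_gt0 w_le_D _ (compressed_abp_setml P (l := size w))).2 B_hits.
by rewrite -(compressed_abp_coef P w_gt0 w_le_D (Ordinal hn) (erefl _)) B_zero.
Qed.
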